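(* Let $T$ be a noncrossing tree with vertex set $[n]$, with signature $s(T)=(s_1,\dots,s_n)$, and let $\overline{ik}\in T$ with $i<k$. Then $s_j\ge s_i$ for all $i<j<k$. Moreover, if $i<j<k$ and the path from $j$ to $k$ in $T$ does not contain $i$, then $s_j\ge s_i+1$.
   Context: A graph on $[n]$ is noncrossing if it has no two edges $\overline{ac},\overline{bd}$ with $a<b<c<d$. The signature of a noncrossing tree $T$ on $[n]$ is the sequence $s(T)=(s_1,\dots,s_n)$ defined by $s_1=1$ and, for $i>1$: $s_i=s_j$ where $j<i$ is the minimum vertex with $\overline{ji}\in T$, if such $j$ exists; otherwise $s_i=s_{i-1}+1$. *)

From mathcomp Require Import all_boot.
Set Implicit Arguments. Unset Strict Implicit. Unset Printing Implicit Defensive.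

(* Vertices are the natural numbers 1..n; a graph on [n] is given by its
   adjacency relation [adj : rel nat] (symmetric, loopless, supported on [n]). *)

Definition in_range (n v : nat) : bool := (1 <= v) && (v <= n).

Definition is_graph (n : nat) (adj : rel nat) : Prop :=
  [/\ (forall a b, adj a b -> in_range n a && in_range n b),
      (forall a b, adj a b = adj b a) &
      (forall a, ~~ adj a a)].

Definition num_edges (n : nat) (adj : rel nat) : nat :=
  \sum_(1 <= a < n.+1) \sum_(a.+1 <= b < n.+1) (adj a b : nat).

Definition connected_on (n : nat) (adj : rel nat) : Prop :=
  forall x y, in_range n x -> in_range n y ->
    exists p : seq nat, path adj x p && (last x p == y).

Definition is_tree (n : nat) (adj : rel nat) : Prop :=
  [/\ is_graph n adj, connected_on n adj & num_edges n adj = n.-1].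

Definition noncrossing (adj : rel nat) : Prop :=
  forall a b c d, a < b -> b < c -> c < d -> ~~ (adj a c && adj b d).

Definition noncrossing_tree (n : nat) (adj : rel nat) : Prop :=
  is_tree n adj /\ noncrossing adj.

(* sigs adj k = [:: s_1; ...; s_k] *)
Fixpoint sigs (adj : rel nat) (k : nat) : seq nat :=
  match k with
  | 0 => [::]
  | k'.+1 =>
      let l := sigs adj k' in
      let i := k'.+1 in
      rcons l
        (if i == 1 then 1 else
         match [seq j <- iota 1 k' | adj j i] with
         | j :: _ => nth 0 l j.-1      (* j = minimum vertex < i adjacent to i *)
         | [::] => (last 0 l).+1       (* s_{i-1} + 1 *)
         end)
  end.

Definition signature (adj : rel nat) (i : nat) : nat := nth 0 (sigs adj i) i.-1.

(* p encodes the simple path j :: p from j to k in the graph *)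
Definition simple_path (adj : rel nat) (j : nat) (p : seq nat) (k : nat) : bool :=
  [&& path adj j p, last j p == k & uniq (j :: p)].

From mathcomp Require Import all_boot zify.
From Stdlib Require Import Classical.
Set Implicit Arguments. Unset Strict Implicit. Unset Printing Implicit Defensive.

(* The first claim follows by strong induction on j: by noncrossing, the
   least neighbour m < j of j satisfies m >= i (an edge m j with m < i would
   cross i k), so s_j is either s_m or s_(j-1) + 1, both >= s_i.  Following
   least lower neighbours from a j with s_j = s_i therefore walks down to i
   through vertices < k.  If moreover j reaches k avoiding i, then i and k are
   joined without using the edge i k, so T minus that edge is still connected;
   but it has n - 2 edges, and a graph on [n] covered by the components of a
   set S of vertices has at least n - |S| edges. *)

Definition reach (g : rel nat) x y := exists p : seq nat, path g x p && (last x p == y).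

Lemma reach_refl g x : reach g x x.
Proof. by exists [::]; rewrite /= eqxx. Qed.

Lemma reach_edge (g : rel nat) x y : g x y -> reach g x y.
Proof. by move=> gxy; exists [:: y]; rewrite /= gxy eqxx. Qed.

Lemma reach_trans g x y z : reach g x y -> reach g y z -> reach g x z.
Proof.
move=> [p /andP[gp /eqP <-]] [q /andP[gq /eqP <-]].
by exists (p ++ q); rewrite cat_path last_cat gp gq eqxx.
Qed.

Lemma reach_path (g : rel nat) x p : path g x p -> reach g x (last x p).
Proof. by move=> gp; exists p; rewrite gp eqxx. Qed.

Lemma reach_sub (g g' : rel nat) x y :
  (forall a b, g a b -> reach g' a b) -> reach g x y -> reach g' x y.
Proof.
move=> gg' [p /andP[+ /eqP <-]]; elim: p x => [|z p IHp] x /=.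
  by move=> _; apply: reach_refl.
by case/andP=> /gg' gxz /IHp; apply: reach_trans.
Qed.

Lemma reach_sym (g : rel nat) x y : symmetric g -> reach g x y -> reach g y x.
Proof.
move=> gC [p /andP[+ /eqP <-]]; elim: p x => [|z p IHp] x /=.
  by move=> _; apply: reach_refl.
by case/andP=> gxz /IHp rz; apply: reach_trans rz (reach_edge _); rewrite gC.
Qed.

Definition rem_edge (g : rel nat) u w : rel nat :=
  fun a b => g a b && ~~ (((a == u) && (b == w)) || ((a == w) && (b == u))).

Lemma rem_edgeC (g : rel nat) u w : symmetric g -> symmetric (rem_edge g u w).
Proof.
move=> gC a b; rewrite /rem_edge gC.
by case: (a == u); case: (b == w); case: (a == w); case: (b == u).
Qed.

Lemma rem_edge_graph n (g : rel nat) u w : is_graph n g -> is_graph n (rem_edge g u w).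
Proof.
case=> g_range gC g_irr; split => [a b /andP[/g_range] //| |a].
- exact: rem_edgeC.
- by rewrite /rem_edge (negbTE (g_irr a)).
Qed.

Lemma reach_rem_edge (g : rel nat) u w x y : reach g x y ->
  reach (rem_edge g u w) x y \/
  ((reach (rem_edge g u w) x u \/ reach (rem_edge g u w) x w) /\
   (reach (rem_edge g u w) u y \/ reach (rem_edge g u w) w y)).
Proof.
move=> [p /andP[+ /eqP <-]]; elim: p x => [|z p IHp] x /=.
  by left; apply: reach_refl.
case/andP=> gxz /IHp IHz; case E: (rem_edge g u w x z).
  case: IHz => [rzy | [rz ry]]; first by left; apply: reach_trans (reach_edge E) rzy.
  by right; split => //; case: rz => rz; [left | right]; apply: reach_trans (reach_edge E) rz.
have uw_xz : ((x == u) && (z == w)) || ((x == w) && (z == u)).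
  by move: E; rewrite /rem_edge gxz => /negbFE.
right; split; first by case/orP: uw_xz => /andP[/eqP-> _]; [left | right]; apply: reach_refl.
case: IHz => [rzy | [_ ry]] //.
by case/orP: uw_xz => /andP[_ /eqP zE]; move: rzy; rewrite zE => rzy; [right | left].
Qed.

Lemma rem_edge_reach_of_detour (g : rel nat) u w x y : symmetric g ->
  reach (rem_edge g u w) u w -> reach g x y -> reach (rem_edge g u w) x y.
Proof.
move=> gC ruw; apply: reach_sub => a b gab.
case E: (rem_edge g u w a b); first exact: reach_edge.
move: E; rewrite /rem_edge gab /= => /negbFE /orP[] /andP[/eqP-> /eqP->] //.
exact: reach_sym (rem_edgeC u w gC) ruw.
Qed.

Lemma ltn_sum_seq (r : seq nat) (F G : nat -> nat) x : uniq r -> x \in r ->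
  (forall a, G a <= F a) -> G x < F x -> \sum_(a <- r) G a < \sum_(a <- r) F a.
Proof.
move=> r_uniq xr GF Gx; rewrite (bigD1_seq x xr r_uniq) (bigD1_seq x xr r_uniq) /=.
by rewrite -addSn leq_add // leq_sum.
Qed.

Lemma num_edges_rem_edge n (g : rel nat) u w : 0 < u -> u < w -> w <= n -> g u w ->
  num_edges n (rem_edge g u w) < num_edges n g.
Proof.
move=> u_gt0 uw wn guw; have le_rem a b : (rem_edge g u w a b : nat) <= g a b.
  by rewrite /rem_edge; case: (g a b); case: (_ || _).
apply: (@ltn_sum_seq _ _ _ u (iota_uniq _ _)) => [|a|].
- by rewrite mem_index_iota u_gt0 ltnS (leq_trans (ltnW uw) wn).
- exact: leq_sum.
- apply: (@ltn_sum_seq _ _ _ w (iota_uniq _ _)) => //.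
  + by rewrite mem_index_iota uw ltnS.
  + by rewrite /rem_edge guw !eqxx.
Qed.

Definition covers n (g : rel nat) (S : seq nat) :=
  forall v, in_range n v -> exists2 s, s \in S & reach g v s.

Lemma covers_edgeless n (g : rel nat) S : is_graph n g ->
  (forall a b, 0 < a -> a < b -> b <= n -> ~~ g a b) -> covers n g S -> n <= size S.
Proof.
case=> g_range gC g_irr no_edge S_cov.
rewrite -[n](size_iota 1); apply: uniq_leq_size (iota_uniq _ _) _ => v.
rewrite mem_iota add1n ltnS => v_range.
have [s sS [[|z p] /andP[/= + /eqP vs]]] := S_cov v v_range; first by rewrite [v]vs.
case/andP=> gvz _; have /andP[/andP[v1 vn] /andP[z1 zn]] := g_range _ _ gvz.
case: (ltngtP v z) => [vz | zv | vz].
- by rewrite (negbTE (no_edge _ _ v1 vz zn)) in gvz.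
- by rewrite gC (negbTE (no_edge _ _ z1 zv vn)) in gvz.
- by rewrite vz (negbTE (g_irr z)) in gvz.
Qed.

(* Removing an edge u w costs one edge and at most one extra representative:
   w if w's new component misses S, and u otherwise. *)
Lemma covers_num_edges n (g : rel nat) S : is_graph n g -> covers n g S ->
  n <= size S + num_edges n g.
Proof.
have [m] := ubnP (num_edges n g); elim: m g S => // m IHm g S edges_lt g_graph S_cov.
have [[u [w [u_gt0 uw wn guw]]] | no_edge] :=
  classic (exists u w, [/\ 0 < u, u < w, w <= n & g u w]); last first.
  apply: leq_trans (leq_addr _ _); apply: covers_edgeless g_graph _ S_cov.
  by move=> a b a_gt0 ab bn; apply/negP => gab; apply: no_edge; exists a, b.
set g' := rem_edge g u w.
have edges_rem := num_edges_rem_edge u_gt0 uw wn guw.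
suff [x S'_cov] : exists x, covers n g' (x :: S).
  apply: leq_trans (IHm _ _ _ (rem_edge_graph u w g_graph) S'_cov) _.
    exact: leq_trans edges_rem _.
  by rewrite addSn -addnS leq_add2l.
have [[s0 s0S ws0] | w_alone] := classic (exists2 s, s \in S & reach g' w s).
- exists u => v v_range; have [s sS rvs] := S_cov v v_range.
  have [rvs' | [[rvu | rvw] _]] := reach_rem_edge u w rvs.
  + by exists s; rewrite ?inE ?sS ?orbT.
  + by exists u; rewrite ?inE ?eqxx.
  + by exists s0; [rewrite inE s0S orbT | apply: reach_trans rvw ws0].
- exists w => v v_range; have [s sS rvs] := S_cov v v_range.
  have [rvs' | [[rvu | rvw] [rus | rws]]] := reach_rem_edge u w rvs.
  + by exists s; rewrite ?inE ?sS ?orbT.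
  + by exists s; [rewrite inE sS orbT | apply: reach_trans rvu rus].
  + by case: w_alone; exists s.
  + by exists w; rewrite ?inE ?eqxx.
  + by exists w; rewrite ?inE ?eqxx.
Qed.

Lemma tree_rem_edge_disconnected n (g : rel nat) u w : is_tree n g -> u < w -> g u w ->
  ~ reach (rem_edge g u w) u w.
Proof.
case=> g_graph g_conn g_edges uw guw ruw; have [g_range gC _] := g_graph.
have /andP[/andP[u_gt0 _] /andP[_ wn]] := g_range _ _ guw.
have one_cov : covers n (rem_edge g u w) [:: 1].
  have one_range : in_range n 1 by rewrite /in_range; lia.
  move=> v v_range; exists 1; rewrite ?inE //.
  have [p /andP[gp /eqP <-]] := g_conn v 1 v_range one_range.
  exact: rem_edge_reach_of_detour gC ruw (reach_path gp).
have := covers_num_edges (rem_edge_graph u w g_graph) one_cov.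
have := num_edges_rem_edge u_gt0 uw wn guw; rewrite g_edges /=; lia.
Qed.

Lemma size_sigs adj k : size (sigs adj k) = k.
Proof. by elim: k => //= k IHk; rewrite size_rcons IHk. Qed.

Lemma nth_sigs adj k x : 0 < x <= k -> nth 0 (sigs adj k) x.-1 = signature adj x.
Proof.
elim: k => [|k IHk] /andP[x_gt0]; first by rewrite leqn0 => /eqP x0; rewrite x0 in x_gt0.
rewrite leq_eqVlt => /orP[/eqP-> // | xk].
rewrite [sigs adj k.+1]/= nth_rcons size_sigs (_ : x.-1 < k) ?prednK //.
by rewrite IHk // x_gt0.
Qed.

Lemma signatureP (adj : rel nat) x : 1 < x ->
  (exists2 m, 0 < m < x & adj m x /\ signature adj x = signature adj m) \/
  signature adj x = (signature adj x.-1).+1.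
Proof.
case: x => [|k] // k_gt0.
have -> : signature adj k.+1 =
    match [seq m <- iota 1 k | adj m k.+1] with
    | [::] => (last 0 (sigs adj k)).+1
    | m :: _ => nth 0 (sigs adj k) m.-1
    end.
  by rewrite /signature [sigs adj k.+1]/= nth_rcons size_sigs ltnn eqxx; case: k k_gt0.
case E: [seq m <- iota 1 k | adj m k.+1] => [|m r].
- by right; rewrite -nth_last size_sigs.
- left; have : m \in [seq m <- iota 1 k | adj m k.+1] by rewrite E mem_head.
  rewrite mem_filter mem_iota add1n => /andP[adj_m m_range].
  by exists m => //; rewrite nth_sigs.
Qed.

Section UnderAnEdge.

Variables (adj : rel nat) (i k : nat).
Hypotheses (adjC : symmetric adj) (adj_nc : noncrossing adj).
Hypotheses (i_gt0 : 0 < i) (ik : i < k) (adj_ik : adj i k).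

Lemma noncrossing_lower_neighbor j m : i < j -> j < k -> m < j -> adj m j -> i <= m.
Proof.
move=> ij jk mj adj_mj; rewrite leqNgt; apply/negP => mi.
by move: (adj_nc mi ij jk); rewrite adj_mj adj_ik.
Qed.

Lemma signature_ge_under_edge j : i <= j -> j < k -> signature adj i <= signature adj j.
Proof.
elim/ltn_ind: j => j IHj; rewrite leq_eqVlt => /orP[/eqP-> // | ij] jk.
have [[m /andP[_ mj] [adj_mj ->]] | ->] := signatureP adj (leq_ltn_trans i_gt0 ij).
- by apply: IHj (noncrossing_lower_neighbor ij jk mj adj_mj) (ltn_trans mj jk).
- by apply: leq_trans (leqnSn _); apply: IHj; lia.
Qed.

Lemma signature_eq_path_down j : i <= j -> j < k -> signature adj j = signature adj i ->
  exists q, [&& path adj j q, last j q == i & all (fun v => v < k) (j :: q)].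
Proof.
elim/ltn_ind: j => j IHj; rewrite leq_eqVlt => /orP[/eqP<- | ij] jk sji.
  by exists [::]; rewrite /= eqxx ik.
have [[m /andP[_ mj] [adj_mj sjm]] | sj] := signatureP adj (leq_ltn_trans i_gt0 ij).
- have im := noncrossing_lower_neighbor ij jk mj adj_mj.
  have [q /and3P[adj_q /eqP qi q_lt]] := IHj m mj im (ltn_trans mj jk) (etrans (esym sjm) sji).
  by exists (m :: q); rewrite /= adjC adj_mj adj_q qi eqxx jk.
- have i_le : i <= j.-1 by lia.
  have := signature_ge_under_edge i_le (leq_ltn_trans (leq_pred j) jk); lia.
Qed.

End UnderAnEdge.

Theorem lemma3p13 (n : nat) (adj : rel nat) (i k : nat) :
  noncrossing_tree n adj -> i < k -> adj i k ->
  (forall j, i < j -> j < k -> signature adj i <= signature adj j) /\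
  (forall j (p : seq nat), i < j -> j < k ->
     simple_path adj j p k -> i \notin (j :: p) ->
     (signature adj i).+1 <= signature adj j).
Proof.
move=> [adj_tree adj_nc] ik adj_ik; have [[adj_range adjC _] _ _] := adj_tree.
have /andP[/andP[i_gt0 _] _] := adj_range _ _ adj_ik.
have sig_ge j := @signature_ge_under_edge adj i k adj_nc i_gt0 ik adj_ik j.
split => [j ij jk | j p ij jk /and3P[adj_p /eqP pk _] i_notin]; first exact: sig_ge (ltnW ij) jk.
rewrite ltn_neqAle sig_ge ?(ltnW ij) // andbT; apply/negP => /eqP sij.
have [q /and3P[adj_q /eqP qi q_lt]] :=
  signature_eq_path_down adjC adj_nc i_gt0 ik adj_ik (ltnW ij) jk (esym sij).
apply: (tree_rem_edge_disconnected adj_tree ik adj_ik).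
have r_ji : reach (rem_edge adj i k) j i.
  rewrite -qi; apply/reach_path/(sub_in_path _ q_lt adj_q) => a b a_lt b_lt adj_ab.
  by rewrite /rem_edge adj_ab (ltn_eqF a_lt) (ltn_eqF b_lt) andbF.
have r_jk : reach (rem_edge adj i k) j k.
  rewrite -pk; apply: reach_path (sub_in_path (P := predC1 i) _ _ adj_p).
    by move=> a b /[!inE] ai bi adj_ab; rewrite /rem_edge adj_ab (negbTE ai) (negbTE bi) andbF.
  by apply/allP => v vjp; apply: contraNneq i_notin => <-.
exact: reach_trans (reach_sym (rem_edgeC i k adjC) r_ji) r_jk.
Qed.
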